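(* There exists an instance of the two-party spatial voting game with abstention described in the context, with $X$ consisting of seven policies, both parties' preferences strict and single-peaked, and four voters, that has a pure-strategy Nash equilibrium $(s,t)$ exhibiting mutual leapfrogging, i.e. $t<\tau_A<\tau_B<s$, and at which every voter is active.
   Context: Policy space: $X=\{x_j : j\in I\}$ where $I\subseteq\mathbb Z$ is an interval of integers and $x_j<x_{j+1}$; $X$ is linearly ordered by $<$. Parties: two parties $A$ and $B$ with ideal points $\tau_A=x_p$ and $\tau_B=x_q$, where $p<q$. Each party $i\in\{A,B\}$ has a weak preference order $\succeq_i$ on $X$ with unique ideal point $\tau_i$. Single-peakedness of $\succeq_i$: if $x_a<x_b\le\tau_i$ then $x_b\succ_i x_a$, and if $\tau_i\le x_b<x_a$ then $x_b\succ_i x_a$ (no restriction is imposed on comparisons across opposite sides of $\tau_i$). Voters: a finite electorate $V$. Each voter $v\in V$ has an ideal point $\theta_v\in X$, strict single-peaked preferences over $X$ with peak $\theta_v$, and an attraction interval $A_v\subseteq X$, an interval of the order on $X$ containing $\theta_v$. Election: party $A$ chooses $s\in X$, party $B$ chooses $t\in X$. Voter $v$ is active at $(s,t)$ if $s\in A_v$ or $t\in A_v$. An active voter votes for the platform she strictly prefers and abstains if indifferent (in particular if $s=t$); inactive voters abstain. $N_A(s,t)$ (resp. $N_B(s,t)$) is the number of active voters strictly preferring $s$ to $t$ (resp. $t$ to $s$). The outcome $g(s,t)$ is $A$ if $N_A>N_B$, $B$ if $N_B>N_A$, and $T$ (tie) if equal. Party objectives (lexicographic): Win $\succ$ Tie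 $\succ$ Lose for each party (outcome $A$ is a win for $A$ and a loss for $B$, and vice versa); between profiles with the same electoral outcome, $A$ weakly prefers $(s,t)$ to $(s',t')$ iff $s\succeq_A s'$, and $B$ iff $t\succeq_B t'$. A pure-strategy Nash equilibrium is a profile at which neither party has a strictly preferred unilateral deviation. *)

From mathcomp Require Import all_boot.
Set Implicit Arguments. Unset Strict Implicit. Unset Printing Implicit Defensive.

(* Policy space: 'I_n = {x_0 < ... < x_{n-1}}, ordered by the nat order. *)

Section Game.
Variable n : nat.
Local Notation X := 'I_n.

(* A weak preference order (complete preorder): r x y means "x is weakly
   preferred to y". *)
Definition weak_order (r : rel X) : Prop :=
  reflexive r /\ transitive r /\ total r.

Definition strict_order (r : rel X) : Prop :=
  weak_order r /\ antisymmetric r.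

Definition spref (r : rel X) (x y : X) : bool := r x y && ~~ r y x.

Definition ideal_point (r : rel X) (tau : X) : Prop :=
  forall x, x != tau -> spref r tau x.

(* single-peakedness w.r.t. the peak tau (no cross-side restriction) *)
Definition single_peaked (r : rel X) (tau : X) : Prop :=
  ideal_point r tau /\
  (forall a b : X, a < b -> b <= tau -> spref r b a) /\
  (forall a b : X, tau <= b -> b < a -> spref r b a).

Definition is_interval (A : {set X}) : Prop :=
  forall a b c : X, a \in A -> c \in A -> a <= b -> b <= c -> b \in A.

Variables (V : finType) (pv : V -> rel X) (att : V -> {set X}).

Definition active (s t : X) (v : V) : bool := (s \in att v) || (t \in att v).

Definition NA (s t : X) : nat := #|[set v | active s t v & spref (pv v) s t]|.
Definition NB (s t : X) : nat := #|[set v | active s t v & spref (pv v) t s]|.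

Inductive outcome := WinA | WinB | Tie.

Definition g (s t : X) : outcome :=
  if NB s t < NA s t then WinA else if NA s t < NB s t then WinB else Tie.

Definition rankA (o : outcome) : nat :=
  match o with WinA => 2 | Tie => 1 | WinB => 0 end.
Definition rankB (o : outcome) : nat :=
  match o with WinB => 2 | Tie => 1 | WinA => 0 end.

Variables (prefA prefB : rel X).

Definition A_strictly_prefers (s' t' s t : X) : Prop :=
  rankA (g s t) < rankA (g s' t') \/
  (g s' t' = g s t /\ spref prefA s' s).

Definition B_strictly_prefers (s' t' s t : X) : Prop :=
  rankB (g s t) < rankB (g s' t') \/
  (g s' t' = g s t /\ spref prefB t' t).

Definition nash_eq (s t : X) : Prop :=
  (forall s', ~ A_strictly_prefers s' t s t) /\
  (forall t', ~ B_strictly_prefers s t' s t).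

End Game.

(* At (x6, x3) the two voters peaked at x6, whose attraction sets hug x6,
   vote for A, while the two voters peaked at x3 and x0, whose attraction sets
   end at x3 and x4, vote for B: a 2-2 tie.  Every move of A towards its ideal
   x4, and every move of B towards its ideal x5, deactivates a supporter of
   the mover and turns the tie into a loss; every other deviation yields at
   best a tie at a less preferred platform. *)
From mathcomp Require Import all_boot.
Set Implicit Arguments. Unset Strict Implicit. Unset Printing Implicit Defensive.

(* [enum 'I_n] is built with [insub], which is stuck on the opaque [idP] and
   so does not evaluate; [ords n] is an enumeration that does. *)
Fixpoint ords (n : nat) : seq 'I_n :=
  if n is m.+1 then ord0 :: map (lift ord0) (ords m) else [::].

Lemma ords_enum n : ords n = enum 'I_n.
Proof.
apply: (inj_map val_inj); rewrite val_enum_ord.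
elim: n => //= n IHn; rewrite (iotaDl 1 0) -IHn -!map_comp.
by congr (_ :: _); apply: eq_map => x; rewrite /= /bump leq0n.
Qed.

Lemma forall_ordP n (P : pred 'I_n) : reflect (forall x, P x) (all P (ords n)).
Proof.
rewrite ords_enum; apply: (iffP allP) => [P_all x | P_all x _]; last exact: P_all.
by apply: P_all; rewrite mem_enum.
Qed.

Lemma card_set_ords n (P : pred 'I_n) : #|[set x | P x]| = count P (ords n).
Proof.
rewrite ords_enum cardsE cardE -size_filter /enum_mem -filter_predI.
by congr size; apply: eq_filter => x; rewrite /= andbT.
Qed.

Lemma injective_ords n (f : 'I_n -> nat) : uniq (map f (ords n)) -> injective f.
Proof. by rewrite ords_enum => f_uniq; apply/injectiveP. Qed.

Section Preferences.
Variable n : nat.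
Implicit Types (r : rel 'I_n) (tau : 'I_n).

Definition single_peakedb r tau : bool :=
  all (fun a : 'I_n => (a != tau) ==> spref r tau a) (ords n) &&
  all (fun a : 'I_n => all (fun b : 'I_n =>
         [&& (a < b <= tau) ==> spref r b a & (tau <= b < a) ==> spref r b a])
       (ords n)) (ords n).

Lemma single_peakedP r tau : reflect (single_peaked r tau) (single_peakedb r tau).
Proof.
apply: (iffP andP) => [[/forall_ordP peak /forall_ordP sides]|[peak [left right]]].
- have side a b := forall_ordP _ (sides a) b.
  split; [|split] => [x|a b ab btau|a b taub ba].
  + exact/implyP/peak.
  + by have /andP[/implyP -> //] := side a b; rewrite ab btau.
  + by have /andP[_ /implyP -> //] := side a b; rewrite taub ba.
- split; apply/forall_ordP => a; first exact/implyP/peak.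
  apply/forall_ordP => b; apply/andP; split; apply/implyP => /andP[].
  + exact: left.
  + exact: right.
Qed.

Definition rank_pref (rk : 'I_n -> nat) : rel 'I_n := fun x y => rk x <= rk y.

Lemma rank_pref_strict (rk : 'I_n -> nat) : injective rk -> strict_order (rank_pref rk).
Proof.
move=> rk_inj; split; [split; [|split]|] => [x|y x z|x y|x y].
- exact: leqnn.
- exact: leq_trans.
- exact: leq_total.
- by move/anti_leq/rk_inj.
Qed.

Lemma rank_pref_strict_single_peaked (rk : 'I_n -> nat) tau :
    uniq (map rk (ords n)) -> single_peakedb (rank_pref rk) tau ->
  strict_order (rank_pref rk) /\ single_peaked (rank_pref rk) tau.
Proof. by move=> /injective_ords/rank_pref_strict ? /single_peakedP. Qed.

Definition segment (lo hi : nat) : {set 'I_n} := [set x : 'I_n | lo <= x <= hi].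

Lemma segment_interval lo hi : is_interval (segment lo hi).
Proof.
move=> a b c; rewrite !inE => /andP[loa _] /andP[_ chi] ab bc.
by rewrite (leq_trans loa ab) (leq_trans bc chi).
Qed.

End Preferences.

Definition outcome_of (na nb : nat) : outcome :=
  if nb < na then WinA else if na < nb then WinB else Tie.

Lemma rankA_inj : injective rankA. Proof. by do 2 case. Qed.
Lemma rankB_inj : injective rankB. Proof. by do 2 case. Qed.

Section Tally.
Variables (n k : nat) (pv : 'I_k -> rel 'I_n) (lo hi : 'I_k -> nat).

Definition tally (s t : 'I_n) : nat :=
  count (fun v => ((lo v <= s <= hi v) || (lo v <= t <= hi v)) && spref (pv v) s t)
        (ords k).

Lemma g_tally (s t : 'I_n) :
  g pv (fun v => segment n (lo v) (hi v)) s t = outcome_of (tally s t) (tally t s).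
Proof.
rewrite /g /NA /NB /tally !card_set_ords.
by congr outcome_of; apply: eq_count => v; rewrite /active !inE // orbC.
Qed.

End Tally.

Section NashDecision.
Variables (n : nat) (V : finType) (pv : V -> rel 'I_n) (att : V -> {set 'I_n}).
Variables (prefA prefB : rel 'I_n) (G : 'I_n -> 'I_n -> outcome).
(* Any [G] agreeing with [g] will do; one that evaluates makes [nash_eqb]
   decidable by computation. *)
Hypothesis g_G : g pv att =2 G.

Definition A_improvesb (s' t' s t : 'I_n) : bool :=
  (rankA (G s t) < rankA (G s' t')) ||
  (rankA (G s' t') == rankA (G s t)) && spref prefA s' s.

Definition B_improvesb (s' t' s t : 'I_n) : bool :=
  (rankB (G s t) < rankB (G s' t')) ||
  (rankB (G s' t') == rankB (G s t)) && spref prefB t' t.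

Lemma A_strictly_prefersP s' t' s t :
  reflect (A_strictly_prefers pv att prefA s' t' s t) (A_improvesb s' t' s t).
Proof.
rewrite /A_improvesb -!g_G.
apply: (iffP orP) => [[lt|/andP[/eqP/rankA_inj same sp]]|[lt|[same sp]]].
- by left.
- by right.
- by left.
- by right; rewrite same eqxx sp.
Qed.

Lemma B_strictly_prefersP s' t' s t :
  reflect (B_strictly_prefers pv att prefB s' t' s t) (B_improvesb s' t' s t).
Proof.
rewrite /B_improvesb -!g_G.
apply: (iffP orP) => [[lt|/andP[/eqP/rankB_inj same sp]]|[lt|[same sp]]].
- by left.
- by right.
- by left.
- by right; rewrite same eqxx sp.
Qed.

Definition nash_eqb (s t : 'I_n) : bool :=
  all (fun s' => ~~ A_improvesb s' t s t) (ords n) &&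
  all (fun t' => ~~ B_improvesb s t' s t) (ords n).

Lemma nash_eqP s t : reflect (nash_eq pv att prefA prefB s t) (nash_eqb s t).
Proof.
apply: (iffP andP) => [[/forall_ordP noA /forall_ordP noB]|[noA noB]].
- split=> [s' /A_strictly_prefersP | t' /B_strictly_prefersP]; apply/negP.
  + exact: noA.
  + exact: noB.
- split; apply/forall_ordP.
  + by move=> s'; apply/negP => /A_strictly_prefersP/noA.
  + by move=> t'; apply/negP => /B_strictly_prefersP/noB.
Qed.

End NashDecision.

Notation "''x_' i" := (@Ordinal 7 i isT) (at level 0, i at level 0).

Definition list_rank (l : seq nat) (x : 'I_7) : nat := nth 0 l x.

Definition prefA7 : rel 'I_7 := rank_pref (list_rank [:: 6; 5; 4; 3; 0; 1; 2]).
Definition prefB7 : rel 'I_7 := rank_pref (list_rank [:: 6; 4; 3; 2; 1; 0; 5]).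

Definition voter_rank (v : 'I_4) : 'I_7 -> nat :=
  list_rank (nth [::] [:: [:: 6; 5; 4; 3; 2; 1; 0]; [:: 5; 2; 1; 0; 3; 4; 6];
                          [:: 0; 1; 2; 3; 4; 5; 6]; [:: 6; 5; 4; 3; 2; 1; 0]] v).
Definition voter_pref (v : 'I_4) : rel 'I_7 := rank_pref (voter_rank v).
Definition voter_peak (v : 'I_4) : 'I_7 := nth 'x_0 [:: 'x_6; 'x_3; 'x_0; 'x_6] v.
Definition attraction_lo (v : 'I_4) : nat := nth 0 [:: 6; 1; 0; 5] v.
Definition attraction_hi (v : 'I_4) : nat := nth 0 [:: 6; 3; 4; 6] v.
Definition attraction (v : 'I_4) : {set 'I_7} :=
  segment 7 (attraction_lo v) (attraction_hi v).

Theorem mainTheorem5 :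
  exists (prefA prefB : rel 'I_7) (tauA tauB : 'I_7)
         (V : finType) (theta : V -> 'I_7) (pv : V -> rel 'I_7)
         (att : V -> {set 'I_7}) (s t : 'I_7),
    tauA < tauB /\
    (strict_order prefA /\ single_peaked prefA tauA) /\
    (strict_order prefB /\ single_peaked prefB tauB) /\
    #|V| = 4 /\
    (forall v, [/\ strict_order (pv v), single_peaked (pv v) (theta v),
                   is_interval (att v) & theta v \in att v]) /\
    nash_eq pv att prefA prefB s t /\
    (t < tauA /\ tauA < tauB /\ tauB < s) /\
    (forall v, active att s t v).
Proof.
exists prefA7, prefB7, 'x_4, 'x_5, ('I_4 : finType), voter_peak, voter_pref,
  attraction, 'x_6, 'x_3.
have /forall_ordP voters_ok : all (fun v =>
    [&& uniq (map (voter_rank v) (ords 7)),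
        single_peakedb (voter_pref v) (voter_peak v),
        attraction_lo v <= voter_peak v <= attraction_hi v &
        (attraction_lo v <= 6 <= attraction_hi v) ||
        (attraction_lo v <= 3 <= attraction_hi v)]) (ords 4).
  by vm_compute.
split=> //; split.
  by apply: rank_pref_strict_single_peaked; vm_compute.
split; first by apply: rank_pref_strict_single_peaked; vm_compute.
split; first exact: card_ord.
split.
  move=> v; have /and4P[ranks_uniq peaked peak_in _] := voters_ok v.
  have [strict single] := rank_pref_strict_single_peaked ranks_uniq peaked.
  by split=> //; [exact: segment_interval | rewrite inE].
split.
  apply/(nash_eqP _ _ (g_tally voter_pref attraction_lo attraction_hi)).
  by vm_compute.
split=> // v; have /and4P[_ _ _ active_v] := voters_ok v.
by rewrite /active !inE.
Qed.
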